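(* Let $G$ be a finite group and $X$ a finite $G$-poset. Then the orbit complex $\mathcal{K}(X)/G$ is equal to the simplicial complex $\mathcal{K}(X/G)$.
   Context: A finite $G$-poset is a finite poset with a (right) action of $G$ by order-preserving maps. $\mathcal{K}(Y)$ denotes the simplicial complex of non-empty chains of a poset $Y$. The orbit poset $X/G$ is the set of orbits $\overline{x}$ with $\overline{x}\le\overline{y}$ iff there exist $x_1\in\overline{x}$, $y_1\in\overline{y}$ with $x_1\le y_1$. For a $G$-complex $K$, the orbit complex $K/G$ has as vertices the orbits of vertices of $K$, and a set $\{\overline{v_0},\dots,\overline{v_n}\}$ of such orbits is a simplex iff there are representatives $w_i\in\overline{v_i}$ such that $\{w_0,\dots,w_n\}$ is a simplex of $K$. *)

From mathcomp Require Import all_boot all_order all_fingroup.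
Set Implicit Arguments. Unset Strict Implicit. Unset Printing Implicit Defensive.
Import Order.Theory.
Local Open Scope order_scope.

Definition chain_complex (T : finType) (r : rel T) (V : {set T}) : {set {set T}} :=
  [set s : {set T} | [&& s != set0, s \subset V &
     [forall x in s, forall y in s, r x y || r y x]]].

Definition order_complex (d : Order.disp_t) (X : finPOrderType d) : {set {set X}} :=
  chain_complex (fun x y : X => x <= y) [set: X].

Definition orbits_of (gT : finGroupType) (X : finType) (to : {action gT &-> X})
  : {set {set X}} := [set orbit to [set: gT] x | x : X].

Definition orbit_le (d : Order.disp_t) (X : finPOrderType d) (O P : {set X}) : bool :=
  [exists x in O, exists y in P, x <= y].

Definition orbit_poset_complex (d : Order.disp_t) (X : finPOrderType d)
  (gT : finGroupType) (to : {action gT &-> X}) : {set {set {set X}}} :=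
  chain_complex (@orbit_le d X) (orbits_of to).

(* Orbit complex K/G of a G-complex K (simplices given as sets of vertices):
   vertices are orbits of vertices of K; a set S of such orbits is a simplex iff
   one can choose representatives f O \in O (O \in S) whose set is a simplex of K. *)
Definition orbit_complex (gT : finGroupType) (T : finType) (to : {action gT &-> T})
  (K : {set {set T}}) : {set {set {set T}}} :=
  [set S : {set {set T}} |
     (S \subset [set orbit to [set: gT] v | v in \bigcup_(s in K) s]) &&
     [exists f : {ffun {set T} -> T},
        [forall O in S, f O \in O] && (f @: S \in K)]].

From mathcomp Require Import all_boot all_order all_fingroup.
Import Order.Theory.
Set Implicit Arguments. Unset Strict Implicit. Unset Printing Implicit Defensive.

(* The image of a chain of X under x |-> orbit of x is a chain of X/G, so K(X)/G
   is contained in K(X/G).  Conversely, since G acts by order-preserving maps,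
   if O <= P in X/G then every point of O lies below some point of P.  Hence a
   chain O_1 <= ... <= O_n of orbits lifts to a chain of X by induction: lift
   O_1, ..., O_(n-1); the top of the lifted chain lies in an orbit below O_n,
   hence below some point of O_n. *)

Lemma chain_complexP (T : finType) (r : rel T) (V s : {set T}) :
  reflect [/\ s != set0, s \subset V & {in s &, total r}] (s \in chain_complex r V).
Proof.
rewrite inE; apply: (iffP and3P) => -[s_n0 sV s_tot]; split=> //.
  by move=> x y xs ys; exact: (forall_inP (forall_inP s_tot x xs) y ys).
by apply/forall_inP=> x xs; apply/forall_inP=> y ys; exact: s_tot.
Qed.

Lemma bigcup_chain_complex (T : finType) (r : rel T) (V : {set T}) :
  reflexive r -> \bigcup_(s in chain_complex r V) s = V.
Proof.
move=> r_refl; apply/setP=> v; apply/bigcupP/idP => [[s /chain_complexP[_ sV _]]|vV].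
  exact: subsetP.
exists [set v]; last exact: set11.
apply/chain_complexP; split; first by apply/set0Pn; exists v; exact: set11.
  by rewrite sub1set.
by move=> x y /set1P-> /set1P->; rewrite r_refl.
Qed.

Lemma exists_max_total (T : finType) (r : rel T) (A : {set T}) :
  A != set0 -> {in A & &, transitive r} -> {in A &, total r} ->
  exists2 m, m \in A & {in A, forall x, r x m}.
Proof.
case/set0Pn=> a aA r_trans r_tot.
pose below x := [set y in A | r y x].
have [m mA m_max] := arg_maxnP (fun x => #|below x|) aA.
exists m => // x xA; apply: contraTT (m_max x xA) => not_xm.
have r_mx : r m x by move: (r_tot x m xA mA); rewrite (negbTE not_xm).
rewrite -ltnNge; apply/proper_card/properP; split.
  apply/subsetP=> y; rewrite !inE => /andP[yA r_ym].
  by rewrite yA (r_trans m y x).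
exists x; rewrite !inE xA //=.
by move: (r_tot x x xA xA); rewrite orbb.
Qed.

Section OrbitPoset.

Variables (gT : finGroupType) (d : Order.disp_t) (X : finPOrderType d).
Variable to : {action gT &-> X}.
Hypothesis to_mono : forall (x y : X) (g : gT), (x <= y)%O -> (to x g <= to y g)%O.

Lemma orbit_leP (O P : {set X}) :
  reflect (exists x y, [/\ x \in O, y \in P & (x <= y)%O]) (orbit_le O P).
Proof.
apply: (iffP exists_inP) => [[x xO /exists_inP[y yP le_xy]]|[x [y [xO yP le_xy]]]].
  by exists x, y.
by exists x => //; apply/exists_inP; exists y.
Qed.

Lemma orbit_le_lift (O P : {set X}) (x : X) :
  O \in orbits_of to -> P \in orbits_of to -> orbit_le O P -> x \in O ->
  exists2 y, y \in P & (x <= y)%O.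
Proof.
case/imsetP=> o _ -> /imsetP[p _ ->] /orbit_leP[a [b [a_o b_p le_ab]]] x_o.
have /orbitP[g _ <-] : x \in orbit to [set: gT] a.
  by rewrite orbit_sym (orbit_transl _ a_o) orbit_sym.
exists (to b g); last exact: to_mono.
by rewrite orbit_actr ?in_setT.
Qed.

Lemma orbit_le_section (S : {set {set X}}) (f : {set X} -> X) :
  {in S, forall O, f O \in O} -> {in f @: S &, total (<=%O : rel X)} ->
  {in S &, total (@orbit_le d X)}.
Proof.
move=> f_in fS_tot O P OS PS.
by case/orP: (fS_tot _ _ (imset_f f OS) (imset_f f PS)) => le_f;
  apply/orP; [left | right]; apply/orbit_leP; do 2 eexists; split; eauto.
Qed.

Lemma orbit_le_trans : {in orbits_of to & &, transitive (@orbit_le d X)}.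
Proof.
move=> P O Q P_orb _ Q_orb /orbit_leP[x [y [xO yP le_xy]]] le_PQ.
have [z zQ le_yz] := orbit_le_lift P_orb Q_orb le_PQ yP.
by apply/orbit_leP; exists x, z; rewrite (le_trans le_xy le_yz).
Qed.

Lemma orbit_upper_bound (M : {set X}) (C : {set X}) :
  M \in orbits_of to -> {in C &, total (<=%O : rel X)} ->
  {in C, forall c, exists2 y, y \in M & (c <= y)%O} ->
  exists2 y, y \in M & {in C, forall c, (c <= y)%O}.
Proof.
move=> /imsetP[m _ ->] C_tot C_below.
have [-> | C_n0] := eqVneq C set0.
  by exists m; [exact: orbit_refl | move=> c; rewrite inE].
have [t tC t_max] := exists_max_total C_n0 (in3W (@le_trans _ X)) C_tot.
have [y ym le_ty] := C_below t tC.
by exists y => // c cC; exact: le_trans (t_max c cC) le_ty.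
Qed.

(* [x0] only makes X inhabited, so that [f] exists when [S] is empty. *)
Lemma orbit_chain_lift (S : {set {set X}}) (x0 : X) :
  S \subset orbits_of to -> {in S &, total (@orbit_le d X)} ->
  exists2 f : {set X} -> X,
    {in S, forall O, f O \in O} & {in S &, forall O P, (f O <= f P) || (f P <= f O)}%O.
Proof.
have [n] := ubnP #|S|; elim: n => // n IHn in S *.
rewrite ltnS => S_le_n S_orb S_tot.
have [-> | S_n0] := eqVneq S set0; first by exists (fun _ => x0) => ?; rewrite inE.
have orb_S := subsetP S_orb.
have [M MS M_max] := exists_max_total S_n0 (sub_in3 orb_S orbit_le_trans) S_tot.
set S' := S :\ M.
have S'S : S' \subset S by exact: subsetDl.
have [|||f' f'_in f'_tot] := IHn S'.
- by rewrite (leq_trans _ S_le_n) // (cardsD1 M S) MS.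
- exact: subset_trans S'S S_orb.
- by move=> O P OS' PS'; apply: S_tot; exact: (subsetP S'S).
have [y yM y_max] : exists2 y, y \in M & {in f' @: S', forall c, (c <= y)%O}.
  apply: orbit_upper_bound (orb_S M MS) _ _.
    by move=> _ _ /imsetP[O OS' ->] /imsetP[P PS' ->]; exact: f'_tot.
  move=> _ /imsetP[O OS' ->].
  have OS := subsetP S'S O OS'.
  exact: orbit_le_lift (orb_S O OS) (orb_S M MS) (M_max O OS) (f'_in O OS').
have inS' O : O \in S -> O != M -> O \in S' by rewrite !inE => ? ->.
exists (fun O => if O == M then y else f' O).
  by move=> O OS; case: eqP => [-> // | /eqP O_M]; exact/f'_in/inS'.
move=> O P OS PS; case: eqP => [_ | /eqP O_M]; case: eqP => [_ | /eqP P_M].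
- by rewrite lexx.
- by rewrite y_max ?orbT // imset_f ?inS'.
- by rewrite y_max // imset_f ?inS'.
- by rewrite f'_tot ?inS'.
Qed.

End OrbitPoset.

Theorem proposition2p7 (gT : finGroupType) (d : Order.disp_t) (X : finPOrderType d)
  (to : {action gT &-> X})
  (to_mono : forall (x y : X) (g : gT), (x <= y)%O -> (to x g <= to y g)%O) :
  orbit_complex to (order_complex X) = orbit_poset_complex to.
Proof.
have orbitsE : [set orbit to [set: gT] x | x in [set: X]] = orbits_of to.
  by apply/setP=> O; apply/imsetP/imsetP=> -[x _ ->]; exists x.
apply/setP=> S; rewrite [LHS]inE bigcup_chain_complex; last exact: lexx.
rewrite orbitsE; apply/andP/chain_complexP.
  case=> S_orb /existsP[f /andP[/forall_inP f_in /chain_complexP[fS_n0 _ fS_tot]]].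
  split=> //; last exact: orbit_le_section fS_tot.
  by apply: contraNneq fS_n0 => ->; rewrite imset0.
case=> S_n0 S_orb S_tot; split=> //.
have [O OS] := set0Pn _ S_n0.
have [x0 _ _] := imsetP (subsetP S_orb O OS).
have [f f_in f_tot] := orbit_chain_lift to_mono x0 S_orb S_tot.
apply/existsP; exists [ffun O => f O].
rewrite (eq_imset _ (ffunE _)); apply/andP; split.
  by apply/forall_inP=> P PS; rewrite ffunE f_in.
apply/chain_complexP; split; [by rewrite imset_eq0 | exact: subsetT |].
by move=> _ _ /imsetP[P PS ->] /imsetP[Q QS ->]; exact: f_tot.
Qed.
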